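(* Let $\mathbf d=(d_1,\ldots,d_n)$ be a degree sequence, $w\in[n]$, $\hat n$ and $V_w$ as in the context, and assume $\hat n<n$. Let $\mathfrak s_{n,w}(w)$ be the six-length of $w$ in a random functional graph on $V_w$ with in-degrees $(d_v)_{v\in V_w}$ (the graph of a uniformly random $f:V_w\to V_w$ with $|f^{-1}(\{v\})|=d_v$ for all $v\in V_w$), and let $\mathfrak s_n(w)$ be the six-length of $w$ in a random functional graph with degree sequence $\mathbf d$. Then \[\mathfrak s_n(w)\overset{d}{=}\mathcal R\big(n-\hat n,\ \mathfrak s_{n,w}(w),\ \hat n+1-\mathfrak s_{n,w}(w)\big),\] where the Pólya urn quantities $\{\mathcal R(m,a,b)\}$ are independent of $\mathfrak s_{n,w}(w)$; that is, for every $r$, $\mathbb P(\mathfrak s_n(w)=r)=\sum_{s}\mathbb P(\mathfrak s_{n,w}(w)=s)\,\mathbb P(\mathcal R(n-\hat n,s,\hat n+1-s)=r)$.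
   Context: A degree sequence is $\mathbf d=(d_1,\ldots,d_n)\in\mathbb N_0^n$ with $\sum_j d_j=n$; a random functional graph with degree sequence $\mathbf d$ is the graph (edges $(v,f(v))$) of a uniform $F\in\{f:[n]\to[n]: |f^{-1}(\{i\})|=d_i\ \forall i\}$. Six-length: $\mathfrak s_f(v)=\min\{k\in\mathbb N: f^{(k)}(v)\in\{f^{(j)}(v):0\le j\le k-1\}\}$. Let $\sigma^2=\frac1n\sum_j d_j^2-1$ and $\hat n=\lfloor (n\sigma^2)^{4/3}\rfloor$; when $\hat n<n$, $V_w=[n]\setminus\{v_1,\ldots,v_{n-\hat n}\}$ where $v_1,\ldots,v_{n-\hat n}$ are distinct vertices in $[n]\setminus\{w\}$ with $d_{v_i}=1$ chosen by a fixed deterministic rule. Pólya urn: an $(a,b)$-Pólya urn starts with $a$ red and $b$ blue balls; at each step a ball is drawn uniformly at random and returned together with one additional ball of the same colour; $\mathcal R(m,a,b)$ is the number of red balls after $m$ balls have been added. *)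

From HB Require Import structures.
From mathcomp Require Import all_boot all_order all_algebra.
Set Implicit Arguments. Unset Strict Implicit. Unset Printing Implicit Defensive.
Import Order.TTheory GRing.Theory Num.Theory.

Definition degfuns (T : finType) (d : T -> nat) : {set {ffun T -> T}} :=
  [set f : {ffun T -> T} | [forall i : T, #|[set v | f v == i]| == d i]].

(* Six-length s_f(v) = min { k >= 1 : f^k(v) \in {f^j(v) : 0 <= j <= k-1} }.
   By pigeonhole such k exists and k <= #|T|, so the search over
   k = 1, ..., #|T| (find returns the 0-based index, hence the .+1) is exact. *)
Definition sixlen (T : finType) (f : T -> T) (v : T) : nat :=
  (find (fun k => has (fun j => iter k f v == iter j f v) (iota 0 k))
        (iota 1 #|T|)).+1.

Definition prob_sixlen (T : finType) (d : T -> nat) (v : T) (r : nat) : rat :=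
  (#|[set f in degfuns d | sixlen f v == r]|%:R / #|degfuns d|%:R)%R.

(* P(R(m,a,b) = r) for the (a,b)-Polya urn (first-step decomposition). *)
Fixpoint polya (m a b r : nat) : rat :=
  match m with
  | 0 => (r == a)%:R
  | m'.+1 => (a%:R / (a + b)%:R * polya m' a.+1 b r
              + b%:R / (a + b)%:R * polya m' a b.+1 r)%R
  end.

(* n * sigma^2 = sum_j d_j^2 - n (a natural number since sum d_j = n). *)
Definition nsigma2 (n : nat) (d : 'I_n -> nat) : nat :=
  (\sum_(j < n) (d j) ^ 2) - n.

(* floor(N^(4/3)) = the largest k with k^3 <= N^4. *)
Definition floor43 (N : nat) : nat :=
  \max_(k < (N ^ 4).+1 | k ^ 3 <= N ^ 4) k.

Definition hatn (n : nat) (d : 'I_n -> nat) : nat := floor43 (nsigma2 d).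

From HB Require Import structures.
From mathcomp Require Import all_boot all_order all_algebra.
From mathcomp Require Import ring zify.
Import Order.TTheory GRing.Theory Num.Theory.

Set Implicit Arguments.
Unset Strict Implicit.
Unset Printing Implicit Defensive.

(* Let [f] have in-degrees [d], let [u] be a point of in-degree one and [c] its preimage.
   Short-cutting [c -> u -> f u] to [c -> f u] is a bijection between the functions with
   in-degrees [d] and the pairs [(g, c)] of a function [g] on the other points, with the
   restricted in-degrees, and an arbitrary point [c]. For [w != u] the orbit of [w] under
   [f] is its orbit under [g], plus [u] exactly when [c] lies on it; so if [w] has
   six-length [s] under [g], its six-length under [f] is [s + 1] for [s] of the [#|T|]
   choices of [c], and [s] otherwise. This is one draw from a Polya urn holding [#|T|]
   balls of which [s] are red. Removing the points of in-degree one outside [V_w] one at a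
   time therefore runs the urn started from the law of the six-length on [V_w]. *)

Lemma sixlen_order (T : finType) (f : T -> T) v : sixlen f v = order f v.
Proof.
have loopingE k : has (fun j => iter k f v == iter j f v) (iota 0 k) = looping f v k.
  apply/hasP/trajectP => [[j]|[j lt_jk ->]]; last by exists j; rewrite ?mem_iota.
  by rewrite mem_iota => /andP[_ lt_jk] /eqP; exists j.
rewrite /sixlen -(orderSpred f v); congr S.
case: findP => [/hasP[]|i].
  exists (order f v); last by rewrite loopingE looping_order.
  by rewrite mem_iota order_gt0 ltnS max_card.
rewrite size_iota => lt_i_card /(_ 0).
rewrite nth_iota // add1n loopingE => loop_i /(_ 0) before_i.
apply/eqP; rewrite eqn_leq -ltnS orderSpred; apply/andP; split.
  rewrite ltnNge; apply/negP => le_order_i.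
  have := before_i (order f v).-1; rewrite orderSpred => /(_ le_order_i).
  have lt_pred_card : (order f v).-1 < #|T| by rewrite orderSpred max_card.
  by rewrite nth_iota // add1n orderSpred loopingE looping_order.
rewrite -ltnS orderSpred leqNgt; apply: contraL loop_i => lt_order.
by rewrite -looping_uniq -(take_traject _ _ lt_order) take_uniq ?orbit_uniq.
Qed.

Lemma sixlen_le_card (T : finType) (f : T -> T) v : sixlen f v <= #|T|.
Proof. by rewrite sixlen_order; apply: max_card. Qed.

Lemma fconnect_homo (T : finType) (f : T -> T) (a : {pred T}) x y :
  {homo f : z / z \in a} -> x \in a -> fconnect f x y -> y \in a.
Proof.
by move=> fa ax /iter_findex <-; elim: (findex _ _ _) => //= k; apply: fa.
Qed.

Lemma fconnect_morph (T T' : finType) (f : T -> T) (f' : T' -> T') (g : T' -> T) :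
  (forall y, fconnect f (g y) (g (f' y))) ->
  forall x y, fconnect f' x y -> fconnect f (g x) (g y).
Proof.
move=> gf x y /iter_findex <-; elim: (findex _ _ _) => //= k IHk.
exact: connect_trans IHk (gf _).
Qed.

Lemma sum_nat_of_bool (I : finType) (A : {pred I}) (P : pred I) :
  \sum_(i in A) (P i : nat) = #|[set i in A | P i]|.
Proof. by rewrite -sum1dep_card big_mkcondr /=; apply: eq_bigr => i _; case: (P i). Qed.

Section PolyaStep.

Local Open Scope ring_scope.

(* The law of the red count after one draw from an urn of [N] balls whose red count has
   law [q]. *)
Definition polya_step (N : nat) (q : nat -> rat) (r : nat) : rat :=
  (q r.-1 * r.-1%:R + q r * (N%:R - r%:R)) / N%:R.

Lemma eq_polya_step N q1 q2 : q1 =1 q2 -> polya_step N q1 =1 polya_step N q2.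
Proof. by move=> q12 r; rewrite /polya_step !q12. Qed.

Lemma polya_step_sum N (I : Type) (s : seq I) (p : I -> rat) (q : I -> nat -> rat) r :
  polya_step N (fun x => \sum_(i <- s) p i * q i x) r
  = \sum_(i <- s) p i * polya_step N (q i) r.
Proof.
rewrite /polya_step !big_distrl -big_split /= big_distrl.
by apply: eq_bigr => i _; rewrite /=; ring.
Qed.

Lemma polyaSr k a b r : polya k.+1 a b r = polya_step (a + b + k) (polya k a b) r.
Proof.
rewrite /polya_step; elim: k a b => [|k IHk] a b.
  rewrite /= !addn0; case: r => [|r] /=; first by case: a => [|a] /=; ring.
  rewrite eqSS; have [->|_] := eqVneq r a; first by rewrite gtn_eqF //=; ring.
  have [<-|_] := eqVneq r.+1 a; last by rewrite /=; ring.
  by rewrite natrD /=; ring.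
have polyaS m x : polya m.+1 a b x
  = a%:R / (a + b)%:R * polya m a.+1 b x + b%:R / (a + b)%:R * polya m a b.+1 x by [].
rewrite polyaS IHk IHk !polyaS addSn addnS !addnS.
ring.
Qed.

End PolyaStep.

Section Splice.

Variables (T T' : finType) (emb : T' -> T) (inv : T -> T') (u : T).
Hypothesis embK : cancel emb inv.
Hypothesis invK : {in predC1 u, cancel inv emb}.
Hypothesis emb_neq : forall y, emb y != u.
Implicit Types (g : {ffun T' -> T'}) (c x : T) (y w : T').

(* [T] is [T'] plus the point [u]; [splice (g, c)] inserts [u] on the edge leaving [c],
   and makes [u] a fixed point when [c = u]. *)
Definition splice (p : {ffun T' -> T'} * T) : {ffun T -> T} :=
  [ffun x => if x == p.2 then u
             else if x == u then emb (p.1 (inv p.2)) else emb (p.1 (inv x))].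

Definition unsplice (f : {ffun T -> T}) : {ffun T' -> T'} * T :=
  let c := odflt u [pick x | f x == u] in
  ([ffun y => inv (if emb y == c then f u else f (emb y))], c).

Lemma emb_inj : injective emb. Proof. exact: can_inj embK. Qed.

Lemma splice_eq_u p x : (splice p x == u) = (x == p.2).
Proof.
rewrite /splice ffunE; case: (x =P p.2) => _; first exact: eqxx.
by case: ifP; rewrite (negbTE (emb_neq _)).
Qed.

Lemma spliceK : cancel splice unsplice.
Proof.
move=> [g c]; have pickE : odflt u [pick x | splice (g, c) x == u] = c.
  by case: pickP => [x|/(_ c)] /=; rewrite splice_eq_u ?eqxx // => /eqP.
rewrite /unsplice pickE; congr pair; apply/ffunP => y; rewrite !ffunE.
have [<-|_] /= := eqVneq (emb y) c; last by rewrite (negbTE (emb_neq y)) !embK.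
by rewrite eq_sym (negbTE (emb_neq y)) eqxx !embK.
Qed.

Lemma unspliceK (f : {ffun T -> T}) c :
  [set x | f x == u] = [set c] -> splice (unsplice f) = f.
Proof.
move=> /setP pre_u.
have f_eq_u x : (f x == u) = (x == c) by have := pre_u x; rewrite !inE.
have pickE : odflt u [pick x | f x == u] = c.
  by case: pickP => [x|/(_ c)] /=; rewrite f_eq_u ?eqxx // => /eqP.
apply/ffunP => x; rewrite /unsplice pickE !ffunE /=.
have [->|xc] := eqVneq x c; first by apply/esym/eqP; rewrite f_eq_u.
have [xu|xu] := eqVneq x u.
  have -> : emb (inv c) = c by apply: invK; rewrite inE eq_sym -xu.
  by rewrite eqxx xu invK // inE f_eq_u -xu.
have -> : emb (inv x) = x by apply: invK; rewrite inE.
by rewrite (negbTE xc) invK // inE f_eq_u.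
Qed.

Definition relay (c : T) (y : T') : T := if emb y == c then u else emb y.

Lemma splice_relay g c y : splice (g, c) (relay c y) = emb (g y).
Proof.
rewrite /relay ffunE /=; have [<-|yc] := eqVneq (emb y) c.
  by rewrite eq_sym (negbTE (emb_neq y)) eqxx embK.
by rewrite (negbTE yc) (negbTE (emb_neq y)) embK.
Qed.

Lemma relay_inj c : injective (relay c).
Proof.
move=> y z; rewrite /relay.
have [<-|_] := eqVneq (emb y) c; case: eqP => [zy|_].
- by move=> _; apply: emb_inj; rewrite zy.
- by move/esym/eqP; rewrite (negbTE (emb_neq z)).
- by move/eqP; rewrite (negbTE (emb_neq y)).
- exact: emb_inj.
Qed.

Lemma splice_indeg_u p : #|[set x | splice p x == u]| = 1.
Proof. by rewrite -(cards1 p.2); apply: eq_card => x; rewrite !inE splice_eq_u. Qed.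

Lemma splice_indeg_emb g c j :
  #|[set x | splice (g, c) x == emb j]| = #|[set y | g y == j]|.
Proof.
rewrite -(card_imset _ (@relay_inj c)); apply: eq_card => x.
rewrite inE; apply/idP/imsetP => [fx_j|[y]]; last first.
  by rewrite inE => /eqP gy_j ->; rewrite splice_relay gy_j.
have xc : x != c.
  apply: contraTneq fx_j => ->.
  have /eqP-> : splice (g, c) c == u by rewrite splice_eq_u.
  by rewrite eq_sym emb_neq.
pose y := inv (if x == u then c else x).
have relay_y : relay c y = x.
  rewrite /relay /y; have [xu|xu] := eqVneq x u.
    by rewrite invK ?eqxx // inE -xu eq_sym.
  by rewrite invK ?(negbTE xc) // inE.
by exists y; rewrite ?relay_y // inE -(inj_eq emb_inj) -(splice_relay g c) relay_y.
Qed.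

Lemma fconnect_splice_step g c y : fconnect (splice (g, c)) (emb y) (emb (g y)).
Proof.
have reach_relay : fconnect (splice (g, c)) (emb y) (relay c y).
  rewrite /relay; case: eqP => [->|_]; last exact: connect0.
  have /eqP <- : splice (g, c) c == u by rewrite splice_eq_u.
  exact: fconnect1.
by rewrite -(splice_relay g c); apply: connect_trans reach_relay (fconnect1 _ _).
Qed.

Lemma fconnect_splice g c w x :
  let R := emb @: fconnect g w in
  fconnect (splice (g, c)) (emb w) x = (x \in R) || (x == u) && (c \in R).
Proof.
move=> R; have gR y : y \in fconnect g w -> emb (g y) \in R.
  by move=> wy; apply: imset_f; apply: connect_trans wy (fconnect1 _ _).
apply/idP/idP => [|/orP[/imsetP[y wy ->]|/andP[/eqP-> /imsetP[y wy c_y]]]].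
- apply: (fconnect_homo (a := [pred z | (z \in R) || (z == u) && (c \in R)])).
    move=> z /orP[/imsetP[y wy ->]|/andP[/eqP-> /imsetP[y wy c_y]]]; rewrite !inE.
      have [e_y|ne_y] := eqVneq (emb y) c.
        have /eqP-> : splice (g, c) (emb y) == u by rewrite splice_eq_u e_y.
        by rewrite eqxx -e_y imset_f ?orbT.
      have relay_y : relay c y = emb y by rewrite /relay (negbTE ne_y).
      by rewrite -relay_y splice_relay gR.
    have relay_y : relay c y = u by rewrite /relay -c_y eqxx.
    by rewrite -relay_y splice_relay gR.
  by apply/orP; left; apply: imset_f; apply: connect0.
- exact: fconnect_morph (fconnect_splice_step g c) _ _ wy.
have /eqP <- : splice (g, c) c == u by rewrite splice_eq_u.
rewrite c_y; apply: connect_trans (fconnect1 _ _).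
exact: fconnect_morph (fconnect_splice_step g _) _ _ wy.
Qed.

Lemma sixlen_splice g c w :
  sixlen (splice (g, c)) (emb w) = sixlen g w + (c \in emb @: fconnect g w).
Proof.
rewrite !sixlen_order /order (eq_card (fconnect_splice g c w)).
set R := emb @: fconnect g w.
have card_R : #|R| = #|fconnect g w| by rewrite card_imset //; apply: emb_inj.
have u_notin_R : u \notin R.
  by apply/imsetP => -[y _ /eqP]; rewrite eq_sym (negbTE (emb_neq y)).
case: (c \in R).
  transitivity #|u |: R|; first by apply: eq_card => x; rewrite unfold_in !inE andbT orbC.
  by rewrite cardsU1 u_notin_R card_R addnC.
by rewrite addn0 -card_R; apply: eq_card => x; rewrite unfold_in andbF orbF.
Qed.

Lemma card_splice_sixlen g w r :
  #|[set c | sixlen (splice (g, c)) (emb w) == r]|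
  = (sixlen g w == r.-1) * r.-1 + (sixlen g w == r) * (#|T| - r).
Proof.
set R := emb @: fconnect g w; set s := sixlen g w.
have card_R : #|R| = s by rewrite card_imset ?/s ?sixlen_order //; exact: emb_inj.
have -> : [set c | sixlen (splice (g, c)) (emb w) == r]
          = [set c | s + (c \in R) == r].
  by apply/setP => c; rewrite !inE sixlen_splice.
have [->|rN] := eqVneq r s.+1.
  rewrite /= eqxx (ltn_eqF (ltnSn s)) mul1n mul0n addn0 -card_R; apply: eq_card => c.
  by rewrite inE -addn1 eqn_add2l; case: (c \in R).
have [->|rN'] := eqVneq r s.
  rewrite (@gtn_eqF s.-1) ?ltn_predL // mul0n mul1n add0n -card_R -(cardsC R) addKn.
  by apply: eq_card => c; rewrite !inE -[X in _ == X]addn0 eqn_add2l; case: (c \in R).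
have -> : (s == r.-1) = false.
  case: r rN {rN'} => [_|r]; first by rewrite eqn0Ngt.
  by apply: contraNF => /eqP ->.
apply/eqP; rewrite mul0n cards_eq0; apply/eqP/setP => c; rewrite !inE.
by case: (c \in R); rewrite ?addn0 ?addn1 eq_sym ?(negbTE rN) ?(negbTE rN').
Qed.

Variable d : T -> nat.
Hypothesis d_u : d u = 1.

Lemma splice_degfuns g c :
  (splice (g, c) \in degfuns d) = (g \in degfuns (fun y => d (emb y))).
Proof.
rewrite !inE; apply/forallP/forallP => deg i.
  by rewrite -(splice_indeg_emb g c); apply: deg.
have [->|iu] := eqVneq i u; first by rewrite splice_indeg_u d_u.
have -> : i = emb (inv i) by rewrite invK // inE.
by rewrite splice_indeg_emb; apply: deg.
Qed.

Lemma card_degfuns_splice (P : pred {ffun T -> T}) :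
  #|[set f in degfuns d | P f]|
  = \sum_(g in degfuns (fun y => d (emb y))) #|[set c | P (splice (g, c))]|.
Proof.
set d' := fun y => d (emb y).
have -> : [set f in degfuns d | P f]
          = splice @: [set p | (p.1 \in degfuns d') && P (splice p)].
  apply/setP => f; rewrite inE; apply/andP/imsetP => [[df Pf]|[[g c]]]; last first.
    by rewrite inE /= => /andP[dg Pf] ->; rewrite splice_degfuns.
  have /cards1P[c pre_u] : #|[set x | f x == u]| == 1.
    by move: df; rewrite inE => /forallP/(_ u); rewrite d_u.
  have fE := unspliceK pre_u.
  exists (unsplice f) => //; rewrite inE.
  case: (unsplice f) fE => g c' /= fE.
  by rewrite fE Pf andbT /d' -(splice_degfuns g c') fE.
rewrite (card_imset _ (can_inj spliceK)).
rewrite -sum1dep_card; under [RHS]eq_bigr do rewrite -sum1dep_card.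
by rewrite pair_big_dep; apply: eq_bigl => -[g c].
Qed.

Local Open Scope ring_scope.

Lemma prob_sixlen_splice w r :
  prob_sixlen d (emb w) r = polya_step #|T| (prob_sixlen (fun y => d (emb y)) w) r.
Proof.
set d' := fun y => d (emb y).
have card_degfuns : #|degfuns d| = (#|degfuns d'| * #|T|)%N.
  transitivity #|[set f in degfuns d | predT f]|.
    by apply: eq_card => f; rewrite inE andbT.
  rewrite card_degfuns_splice -sum_nat_const; apply: eq_bigr => g _.
  by apply: eq_card => c; rewrite inE.
rewrite /prob_sixlen /polya_step card_degfuns card_degfuns_splice.
under eq_bigr do rewrite card_splice_sixlen.
rewrite big_split -!big_distrl /= !sum_nat_of_bool.
set C1 := #|[set g in _ | _ == r.-1]|; set C2 := #|[set g in _ | _ == r]|.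
rewrite natrD; have -> : (C2 * (#|T| - r))%N%:R = C2%:R * (#|T|%:R - r%:R) :> rat.
  have [->|/card_gt0P[g]] := posnP C2; first by rewrite !mul0n !mul0r.
  rewrite inE => /andP[_ /eqP <-]; rewrite natrM natrB //.
  exact: leq_trans (sixlen_le_card g w) (leq_card _ emb_inj).
by rewrite !natrM invfM; ring.
Qed.

End Splice.

Lemma prob_sixlen_predC1 (T : finType) (d : T -> nat) u (w : {x : T | x != u}) r :
  d u = 1 ->
  prob_sixlen d (val w) r
  = polya_step #|T| (prob_sixlen (fun y : {x : T | x != u} => d (val y)) w) r.
Proof.
move=> d_u; exact: (prob_sixlen_splice (valKd w) (insubdK w) (fun y => valP y) d_u).
Qed.

Definition relabel (T T' : finType) (g : T' -> T) (h : T -> T') (f : {ffun T -> T}) :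
  {ffun T' -> T'} := [ffun y => h (f (g y))].

Section Relabel.

Variables (T T' : finType) (g : T' -> T) (h : T -> T').
Hypotheses (gK : cancel g h) (hK : cancel h g).

Lemma relabelK : cancel (relabel g h) (relabel h g).
Proof. by move=> f; apply/ffunP => x; rewrite !ffunE !hK. Qed.

Lemma relabelVK : cancel (relabel h g) (relabel g h).
Proof. by move=> f; apply/ffunP => y; rewrite !ffunE !gK. Qed.

Lemma iter_relabel f k y : iter k (relabel g h f) y = h (iter k f (g y)).
Proof. by elim: k => [|k IHk] /=; rewrite ?gK // IHk ffunE hK. Qed.

Lemma sixlen_relabel f y : sixlen (relabel g h f) y = sixlen f (g y).
Proof.
rewrite /sixlen (bij_eq_card (Bijective gK hK)); congr S.
by apply: eq_find => k; apply: eq_has => j; rewrite !iter_relabel (can_eq hK).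
Qed.

Lemma relabel_degfuns (d : T -> nat) f :
  (relabel g h f \in degfuns (fun y => d (g y))) = (f \in degfuns d).
Proof.
have indeg i : #|[set y | relabel g h f y == i]| = #|[set x | f x == g i]|.
  rewrite -(card_imset _ (can_inj hK)) (can2_imset_pre _ hK gK).
  by apply: eq_card => y; rewrite !inE ffunE -{1}[i]gK (can_eq hK).
rewrite !inE; apply/forallP/forallP => deg i; last by rewrite indeg; apply: deg.
by have := deg (h i); rewrite indeg !hK.
Qed.

Lemma prob_sixlen_relabel d v r :
  prob_sixlen (fun y => d (g y)) v r = prob_sixlen d (g v) r.
Proof.
have relabel_set (P : pred {ffun T' -> T'}) :
    [set f' in degfuns (fun y => d (g y)) | P f']
    = relabel g h @: [set f in degfuns d | P (relabel g h f)].
  rewrite (can2_imset_pre _ relabelK relabelVK); apply/setP => f'.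
  by rewrite in_set -[f' in LHS]relabelVK relabel_degfuns [RHS]in_set [RHS]in_set.
have card_degfuns : #|degfuns (fun y => d (g y))| = #|degfuns d|.
  transitivity #|[set f' in degfuns (fun y => d (g y)) | true]|.
    by apply: eq_card => f'; rewrite inE andbT.
  rewrite relabel_set (card_imset _ (can_inj relabelK)).
  by apply: eq_card => f; rewrite inE andbT.
rewrite /prob_sixlen card_degfuns (relabel_set (fun f' => sixlen f' v == r)).
rewrite (card_imset _ (can_inj relabelK)); congr (_%:R / _)%R.
by apply: eq_card => f; rewrite !inE sixlen_relabel.
Qed.

End Relabel.

Lemma prob_sixlen_gt_card (T : finType) (d : T -> nat) v r :
  #|T| < r -> prob_sixlen d v r = 0%R.
Proof.
move=> lt_card_r; rewrite /prob_sixlen (_ : #|_| = 0) ?mul0r //.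
apply/eqP; rewrite cards_eq0; apply/eqP/setP => f; rewrite !inE.
by rewrite ltn_eqF ?andbF //; apply: leq_ltn_trans (sixlen_le_card f v) _.
Qed.

Lemma sum_nat_delta (p : nat -> rat) m r :
  (\sum_(0 <= s < m) p s * (r == s)%:R = (r < m)%:R * p r)%R.
Proof.
elim: m => [|m IHm]; first by rewrite big_nil mul0r.
rewrite big_nat_recr //= IHm ltnS.
by case: ltngtP => [_|_|->] /=; ring.
Qed.

Theorem prob_sixlen_polya (TV T : finType) (e : TV -> T) (d : T -> nat) (w : TV) :
  injective e -> {in [predC codom e], forall v, d v = 1} -> forall r,
  prob_sixlen d (e w) r
  = (\sum_(0 <= s < #|TV|.+2)
       prob_sixlen (fun z => d (e z)) w s * polya (#|T| - #|TV|) s (#|TV|.+1 - s) r)%R.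
Proof.
move eq_k : (#|T| - #|TV|) => k.
elim: k T e d eq_k => [|k IHk] T e d eq_k e_inj deg1 r.
  have le_card : #|T| <= #|TV| by rewrite -subn_eq0 eq_k.
  have [h eK hK] := inj_card_bij e_inj le_card.
  rewrite -(prob_sixlen_relabel eK hK) sum_nat_delta.
  case: ltnP => [_|le_r]; first by rewrite mul1r.
  by rewrite mul0r prob_sixlen_gt_card // (leq_trans (leqnSn _) le_r).
have /subsetPn[u _ u_notin] : ~~ ([set: T] \subset codom e).
  by apply/negP => /subset_leq_card; rewrite cardsT card_codom //; lia.
have e_neq_u z : e z != u by apply: contraNneq u_notin => <-; apply: codom_f.
pose e' z := exist (fun x => x != u) (e z) (e_neq_u z).
have card_T' : #|{: {x : T | x != u}}| - #|TV| = k.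
  rewrite card_sig (eq_card (B := predC1 u)) // cardC1; lia.
have e'_inj : injective e' by move=> z1 z2 /(congr1 val) /e_inj.
have deg1' : {in [predC codom e'], forall v, d (val v) = 1}.
  move=> v; rewrite !inE => v_notin; apply: deg1; rewrite inE.
  by apply: contra v_notin => /codomP[z vz]; apply/codomP; exists z; apply: val_inj.
rewrite [e w]/(val (e' w)) prob_sixlen_predC1; last by apply: deg1; rewrite inE.
rewrite (eq_polya_step _ (IHk _ _ _ card_T' e'_inj deg1')) polya_step_sum !big_nat.
apply: eq_bigr => s /andP[_ le_s]; rewrite polyaSr; congr (_ * polya_step _ _ _)%R.
lia.
Qed.

Theorem corollary4p7 (n : nat) (d : 'I_n -> nat) (w : 'I_n) (Vw : {set 'I_n})
  (Hsum : \sum_(j < n) d j = n)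
  (Hlt : hatn d < n)
  (HwV : w \in Vw)
  (HcardV : #|Vw| = hatn d)
  (Hdeg1 : forall v, v \notin Vw -> d v = 1) :
  forall r : nat,
    prob_sixlen d w r =
    (\sum_(0 <= s < (hatn d).+2)
        prob_sixlen (fun v : {x : 'I_n | x \in Vw} => d (val v))
                    (exist _ w HwV) s
        * polya (n - hatn d) s ((hatn d).+1 - s) r)%R.
Proof.
have deg1 : {in [predC codom (val : {x | x \in Vw} -> 'I_n)], forall v, d v = 1}.
  move=> v; rewrite inE => v_notin; apply: Hdeg1; apply: contra v_notin => vV.
  by apply/codomP; exists (exist _ v vV).
have card_Vw : #|{: {x | x \in Vw}}| = hatn d by rewrite card_sig -HcardV; apply: eq_card.
move=> r; have := prob_sixlen_polya (exist _ w HwV) val_inj deg1 r.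
by rewrite card_Vw card_ord.
Qed.
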